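(* Let $(p(i),x(i))_{i\in\mathbb{Z}}$ be real sequences satisfying, for all $i\in\mathbb{Z}$, $$p(i+1)=p(i)-\operatorname{sgn}x(i),\qquad x(i+1)=x(i)+p(i)-\operatorname{sgn}x(i).$$ (1) If $x(K)=0$ for some $K\in\mathbb{Z}$, then $x(K-n)+x(K+n)=0$ for every integer $n\ge 1$. (2) Consequently, if $x(0)=x(K)=0$ for some integer $K\ge 1$, then $x(i+2K)=x(i)$ for all $i\in\mathbb{Z}$.
   Context: Here $\operatorname{sgn}(x)=x/|x|$ for $x\neq 0$ and $\operatorname{sgn}(0)=0$. The recursion is invertible, so a sequence on $\mathbb{Z}$ is determined by its value at any single index; equivalently the $x(i)$ satisfy $-x(i-1)+2x(i)-x(i+1)=\operatorname{sgn}x(i)$ for all $i$. *)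

From Stdlib Require Import Reals ZArith.
Open Scope R_scope.

Definition sgn (x : R) : R :=
  if Req_EM_T x 0 then 0 else x / Rabs x.

Definition is_orbit (p x : Z -> R) : Prop :=
  forall i : Z,
    p (i + 1)%Z = p i - sgn (x i) /\
    x (i + 1)%Z = x i + p i - sgn (x i).

(* Eliminating p turns the orbit into the second-order recursion
   x(i+1) + x(i-1) = 2 x(i) - sgn x(i).  For a zero K of x, the symmetric sums
   s(n) = x(K-n) + x(K+n) are even in n, satisfy s(n+1) + s(n-1) = 0 wherever
   s(n) = 0 (the sgn terms cancel because sgn is odd), and start from s(0) = 0;
   hence s(1) = 0 and all s(n) vanish.  Two reflections, about 0 and about K,
   compose to the translation by 2K. *)
From Stdlib Require Import Reals ZArith Lra Lia.
Open Scope R_scope.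

Lemma sgn_opp (a : R) : sgn (- a) = - sgn a.
Proof.
  unfold sgn.
  destruct (Req_EM_T a 0) as [Ha | Ha]; destruct (Req_EM_T (- a) 0) as [Hna | Hna];
    try lra.
  rewrite Rabs_Ropp.
  assert (Rabs a <> 0) by (apply Rabs_no_R0; exact Ha).
  field; assumption.
Qed.

Lemma orbit_second_order (p x : Z -> R) : is_orbit p x -> forall i : Z,
  x (i + 1)%Z + x (i - 1)%Z = 2 * x i - sgn (x i).
Proof.
  intros Horb i.
  destruct (Horb i) as [_ Hx]; destruct (Horb (i - 1)%Z) as [Hp' Hx'].
  replace (i - 1 + 1)%Z with i in Hp', Hx' by lia.
  lra.
Qed.

Definition reflect_sum (x : Z -> R) (K n : Z) : R := x (K - n)%Z + x (K + n)%Z.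

Lemma reflect_sum_opp (x : Z -> R) (K n : Z) :
  reflect_sum x K (- n) = reflect_sum x K n.
Proof.
  unfold reflect_sum.
  replace (K - - n)%Z with (K + n)%Z by lia; replace (K + - n)%Z with (K - n)%Z by lia.
  lra.
Qed.

Section OddSecondOrder.

Variable f : R -> R.
Hypothesis f_opp : forall a, f (- a) = - f a.

Variable x : Z -> R.
Hypothesis x_rec : forall i : Z, x (i + 1)%Z + x (i - 1)%Z = 2 * x i - f (x i).

Lemma reflect_sum_step (K n : Z) : reflect_sum x K n = 0 ->
  reflect_sum x K (n + 1) + reflect_sum x K (n - 1) = 0.
Proof.
  unfold reflect_sum; intro Hn.
  pose proof (x_rec (K + n)) as Hright; pose proof (x_rec (K - n)) as Hleft.
  replace (K + n + 1)%Z with (K + (n + 1))%Z in Hright by lia.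
  replace (K + n - 1)%Z with (K + (n - 1))%Z in Hright by lia.
  replace (K - n + 1)%Z with (K - (n - 1))%Z in Hleft by lia.
  replace (K - n - 1)%Z with (K - (n + 1))%Z in Hleft by lia.
  replace (x (K - n)%Z) with (- x (K + n)%Z) in Hleft by lra.
  rewrite f_opp in Hleft.
  lra.
Qed.

Lemma reflect_sum_eq0 (K : Z) : x K = 0 -> forall n : Z, reflect_sum x K n = 0.
Proof.
  intros xK.
  assert (s0 : reflect_sum x K 0 = 0).
  { unfold reflect_sum; rewrite Z.sub_0_r, Z.add_0_r, xK; lra. }
  assert (s1 : reflect_sum x K 1 = 0).
  { pose proof (reflect_sum_step K 0 s0) as H.
    pose proof (reflect_sum_opp x K 1) as Heven.
    simpl in H, Heven; lra. }
  assert (Hnat : forall m : nat,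
    reflect_sum x K (Z.of_nat m) = 0 /\ reflect_sum x K (Z.of_nat m + 1) = 0).
  { induction m as [|m [IH IH1]]; [split; assumption|].
    split; [rewrite Nat2Z.inj_succ; exact IH1|].
    pose proof (reflect_sum_step K (Z.of_nat m + 1) IH1) as H.
    replace (Z.of_nat m + 1 - 1)%Z with (Z.of_nat m) in H by lia.
    rewrite Nat2Z.inj_succ; unfold Z.succ; lra. }
  intro n; destruct (Z_le_gt_dec 0 n).
  - rewrite <- (Z2Nat.id n) by lia; apply Hnat.
  - rewrite <- reflect_sum_opp, <- (Z2Nat.id (- n)) by lia; apply Hnat.
Qed.

Lemma periodic_of_two_zeros (K : Z) : x 0%Z = 0 -> x K = 0 ->
  forall i : Z, x (i + 2 * K)%Z = x i.
Proof.
  intros x0 xK i.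
  pose proof (reflect_sum_eq0 K xK (i + K)) as HK.
  pose proof (reflect_sum_eq0 0 x0 i) as H0.
  unfold reflect_sum in HK, H0.
  replace (K + (i + K))%Z with (i + 2 * K)%Z in HK by lia.
  replace (K - (i + K))%Z with (0 - i)%Z in HK by lia.
  rewrite Z.add_0_l in H0.
  lra.
Qed.

End OddSecondOrder.

Theorem mainTheorem2 :
  (forall (p x : Z -> R) (K : Z), is_orbit p x -> x K = 0 ->
     forall n : Z, (1 <= n)%Z -> x (K - n)%Z + x (K + n)%Z = 0) /\
  (forall (p x : Z -> R) (K : Z), is_orbit p x -> (1 <= K)%Z ->
     x 0%Z = 0 -> x K = 0 ->
     forall i : Z, x (i + 2 * K)%Z = x i).
Proof.
  split.
  - intros p x K Horb xK n _.
    exact (reflect_sum_eq0 sgn sgn_opp x (orbit_second_order p x Horb) K xK n).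
  - intros p x K Horb _ x0 xK.
    exact (periodic_of_two_zeros sgn sgn_opp x (orbit_second_order p x Horb) K x0 xK).
Qed.
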